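(* Let $G$ be a finite simple graph and $d,M$ positive integers. Suppose $\xi(G)\le d$ and $G$ contains $M$ pairwise vertex-disjoint cliques of size $d$. Then $\Delta_{Md}\le\widehat{G}\otimes\mathcal{C}_d$.
   Context: The orthogonal rank $\xi(G)$ is the smallest $d$ such that there are unit vectors $(u_g)_{g\in V(G)}$ in $\mathbb{C}^d$ with $\langle u_g|u_{g'}\rangle=0$ whenever $g,g'$ are adjacent. A noncommutative graph is a subspace $S\subseteq B(\mathcal{H})$ ($\mathcal{H}$ finite-dimensional) with $I\in S$, $S^*=S$. A cohomomorphism from $T\subseteq B(\mathcal{K})$ to $S\subseteq B(\mathcal{H})$ is a finite family of linear maps $E_i:\mathcal{K}\to\mathcal{H}$ with $\sum_iE_i^*E_i=I$ and $E_i^*SE_j\subseteq T$ for all $i,j$; $T\le S$ if one exists. $S\otimes T=\operatorname{span}\{A\otimes B:A\in S,B\in T\}$. $\widehat{G}=\operatorname{span}\{|x\rangle\langle x'|:x,x'\in V(G),\ x=x'\text{ or }x\sim x'\}\subseteq B(\mathbb{C}^{V(G)})$; $\mathcal{C}_d=\mathbb{C}I\subseteq B(\mathbb{C}^d)$; $\Delta_n\subseteq B(\mathbb{C}^n)$ is the subspace of operators diagonal in the standard basis (the noncommutative graph of the edgeless graph on $n$ vertices). *)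

From HB Require Import structures.
From mathcomp Require Import all_boot all_algebra.
From mathcomp Require Import complex mxtens.
From mathcomp Require Import Rstruct.
Set Implicit Arguments. Unset Strict Implicit. Unset Printing Implicit Defensive.
Import GRing.Theory Num.Theory.
Local Open Scope ring_scope.

Definition C : numClosedFieldType := (Rdefinitions.R)[i].

Definition adjmx {m n : nat} (A : 'M[C]_(m, n)) : 'M[C]_(n, m) :=
  (map_mx Num.conj A)^T.

(* standard inner product <u|v> = u^* v on C^d (antilinear in u) *)
Definition inner {d : nat} (u v : 'cV[C]_d) : C := (adjmx u *m v) 0 0.

Definition simple_graph {n : nat} (e : rel 'I_n) : Prop :=
  symmetric e /\ irreflexive e.

Definition orth_rep {n : nat} (e : rel 'I_n) (d : nat) : Prop :=
  exists u : 'I_n -> 'cV[C]_d,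
    (forall g, inner (u g) (u g) = 1) /\
    (forall g g', e g g' -> inner (u g) (u g') = 0).

(* xi(G) <= d : the smallest dimension of an orthogonal representation is
   at most d, i.e. some dimension d' <= d admits one *)
Definition orth_rank_le {n : nat} (e : rel 'I_n) (d : nat) : Prop :=
  exists2 d', (d' <= d)%N & orth_rep e d'.

Definition is_clique {n : nat} (e : rel 'I_n) (K : {set 'I_n}) : Prop :=
  forall x y, x \in K -> y \in K -> x != y -> e x y.

Definition has_disjoint_cliques {n : nat} (e : rel 'I_n) (M d : nat) : Prop :=
  exists K : 'I_M -> {set 'I_n},
    (forall i, #|K i| = d /\ is_clique e (K i)) /\
    (forall i j, i != j -> [disjoint K i & K j]).

(* Noncommutative graphs are subspaces of B(C^n) = 'M[C]_n *)

Definition Ghat {n : nat} (e : rel 'I_n) : {vspace 'M[C]_n} :=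
  (\sum_(x : 'I_n) \sum_(y : 'I_n | (x == y) || e x y)
      <[delta_mx x y]>)%VS.

Definition Cnc (d : nat) : {vspace 'M[C]_d} := <[1%:M]>%VS.

Definition Delta (n : nat) : {vspace 'M[C]_n} :=
  (\sum_(x : 'I_n) <[delta_mx x x]>)%VS.

(* S (x) T = span{ A (x) B : A in S, B in T } (spanned by tensor products
   of basis elements); A (x) B is the Kronecker product tensmx *)
Definition nc_tensor {m n : nat} (S : {vspace 'M[C]_m}) (T : {vspace 'M[C]_n})
  : {vspace 'M[C]_(m * n)} :=
  (<< [seq A *t B | A <- (vbasis S : seq _), B <- (vbasis T : seq _)] >>)%VS.

(* T <= S : there is a cohomomorphism from T (in B(C^k)) to S (in B(C^h)):
   finitely many E_i : C^k -> C^h with sum E_i^* E_i = I and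
   E_i^* S E_j included in T *)
Definition cohom_le {k h : nat} (T : {vspace 'M[C]_k}) (S : {vspace 'M[C]_h})
  : Prop :=
  exists (N : nat) (E : 'I_N -> 'M[C]_(h, k)),
    \sum_(i < N) adjmx (E i) *m E i = 1%:M /\
    (forall (i j : 'I_N) (A : 'M[C]_h),
        A \in S -> adjmx (E i) *m A *m E j \in T).

From HB Require Import structures.
From mathcomp Require Import all_boot all_algebra.
From mathcomp Require Import complex mxtens.
Set Implicit Arguments. Unset Strict Implicit. Unset Printing Implicit Defensive.
Import GRing.Theory Num.Theory.
Local Open Scope ring_scope.

(* Take an orthogonal representation u of G in C^d (pad it with zeros if its
   dimension is smaller) and an injection k of the M d indices into the vertex
   set, which exists because the disjoint cliques occupy M d distinct vertices.
   The single Kraus operator E e_c = e_(k c) (x) u_(k c) is an isometry, and the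
   (c, c') entry of E^* (|x><y| (x) I) E is [k c = x][k c' = y] <u_x, u_y>.
   Off the diagonal x <> y, so x ~ y and the entry vanishes by orthogonality:
   E^* (Ghat G (x) C_d) E only contains diagonal operators. *)

Lemma tensmx11 (R : pzRingType) m n :
  (1%:M : 'M[R]_m) *t (1%:M : 'M[R]_n) = 1%:M.
Proof.
apply/matrixP => i j.
case: (mxtens_indexP i) => i1 i2; case: (mxtens_indexP j) => j1 j2.
rewrite tensmxE !mxE (inj_eq (can_inj (@mxtens_indexK _ _))) xpair_eqE.
by case: (i1 == j1); case: (i2 == j2); rewrite ?mulr1n ?mulr0n ?mulr1 ?mulr0.
Qed.

Lemma tensmxZr (R : comPzRingType) m n p q
    (A : 'M[R]_(m, n)) c (B : 'M[R]_(p, q)) :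
  A *t (c *: B) = c *: (A *t B).
Proof. by apply/matrixP => i j; rewrite !mxE mulrCA. Qed.

Definition tensmxr {m n p q} (B : 'M[C]_(p, q)) (A : 'M[C]_(m, n)) := A *t B.

Fact tensmxr_is_linear m n p q (B : 'M[C]_(p, q)) : linear (@tensmxr m n p q B).
Proof. by move=> c A A'; apply/matrixP => i j; rewrite !mxE mulrDl mulrA. Qed.

HB.instance Definition _ m n p q (B : 'M[C]_(p, q)) :=
  GRing.isLinear.Build C 'M[C]_(m, n) 'M[C]_(m * p, n * q) *:%R
    (tensmxr B) (tensmxr_is_linear B).

Lemma adjmx_mul m n p (A : 'M[C]_(m, n)) (B : 'M[C]_(n, p)) :
  adjmx (A *m B) = adjmx B *m adjmx A.
Proof. by rewrite /adjmx map_mxM trmx_mul. Qed.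

Lemma adjmx_tens m n p q (A : 'M[C]_(m, n)) (B : 'M[C]_(p, q)) :
  adjmx (A *t B) = adjmx A *t adjmx B.
Proof. by rewrite /adjmx map_mxT trmx_tens. Qed.

Lemma adjmx_delta m n (i : 'I_m) (j : 'I_n) :
  adjmx (delta_mx i j) = delta_mx j i.
Proof. by apply/matrixP => a b; rewrite !mxE rmorph_nat andbC. Qed.

Lemma adjmx_pid m n r : adjmx (pid_mx r : 'M[C]_(m, n)) = pid_mx r.
Proof. by rewrite /adjmx map_pid_mx tr_pid_mx. Qed.

Lemma inner_isometry m n (P : 'M[C]_(m, n)) (u v : 'cV[C]_n) :
  adjmx P *m P = 1%:M -> inner (P *m u) (P *m v) = inner u v.
Proof.
move=> P_iso.
by rewrite /inner adjmx_mul -mulmxA (mulmxA (adjmx P)) P_iso mul1mx.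
Qed.

Lemma orth_rep_widen n (e : rel 'I_n) d d' :
  (d' <= d)%N -> orth_rep e d' -> orth_rep e d.
Proof.
move=> le_d'd [u [u_unit u_orth]].
have P_iso : adjmx (pid_mx d' : 'M[C]_(d, d')) *m pid_mx d' = 1%:M.
  by rewrite adjmx_pid mul_pid_mx minnn (minn_idPr le_d'd) pid_mx_1.
exists (fun g => pid_mx d' *m u g).
by split=> [g | g g' edge]; rewrite inner_isometry // ?u_unit ?u_orth.
Qed.

Lemma card_disjoint_family (T I : finType) (K : I -> {set T}) d :
  (forall i, #|K i| = d) -> (forall i j, i != j -> [disjoint K i & K j]) ->
  (#|I| * d <= #|T|)%N.
Proof.
move=> cardK disjK.
have disj_sum1 x : (\sum_i (x \in K i) <= 1)%N.
  have [i xKi | notK] := pickP (fun i => x \in K i); last first.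
    by rewrite big1 // => i _; rewrite notK.
  rewrite (bigD1 i) //= xKi big1 // => j ji.
  by rewrite (disjointFr (disjK i j _) xKi) // eq_sym.
have -> : (#|I| * d = \sum_i \sum_x (x \in K i))%N.
  rewrite -sum_nat_const; apply: eq_bigr => i _.
  by rewrite -(cardK i) -sum1_card big_mkcond.
by rewrite exchange_big -sum1_card leq_sum.
Qed.

Lemma memv_Delta p (D : 'M[C]_p) : is_diag_mx D -> D \in Delta p.
Proof.
move=> /is_diag_mxP D_diag; rewrite [D]matrix_sum_delta.
apply: memv_sumr => i _; rewrite (bigD1 i) //=.
apply: memvD; first exact/memvZ/memv_line.
by apply: memv_suml => j ji; rewrite D_diag ?scale0r ?mem0v // eq_sym.
Qed.

Lemma nc_tensor_subv m n (S : {vspace 'M[C]_m}) (T : {vspace 'M[C]_n})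
    (U : {vspace 'M[C]_(m * n)}) :
  (forall A B, A \in S -> B \in T -> A *t B \in U) -> (nc_tensor S T <= U)%VS.
Proof.
move=> ST_U; apply/span_subvP => _ /allpairsP[[A B] [/= SA TB ->]].
exact: ST_U (vbasis_mem SA) (vbasis_mem TB).
Qed.

Lemma Ghat_tensor_Cnc_subv n (e : rel 'I_n) d (U : {vspace 'M[C]_(n * d)}) :
  (forall x y, (x == y) || e x y -> delta_mx x y *t 1%:M \in U) ->
  (nc_tensor (Ghat e) (Cnc d) <= U)%VS.
Proof.
move=> gen_U; apply: nc_tensor_subv => A _ GA /vlineP[c ->].
rewrite tensmxZr; apply: memvZ.
suff /subvP/(_ A GA) : (Ghat e <= linfun (tensmxr 1%:M) @^-1: U)%VS.
  by rewrite -memv_preim lfunE.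
apply/subv_sumP => x _; apply/subv_sumP => y xy.
by rewrite -memvE -memv_preim lfunE; apply: gen_U.
Qed.

Lemma adjmx_mulmx_colsE m p (F : 'I_p -> 'cV[C]_m) (A : 'M[C]_m) c c' :
  (adjmx (\matrix_(r, c) F c r 0) *m A *m \matrix_(r, c) F c r 0) c c'
  = (adjmx (F c) *m A *m F c') 0 0.
Proof.
rewrite !mxE; apply: eq_bigr => s _; rewrite !mxE; congr (_ * _).
by apply: eq_bigr => r _; rewrite !mxE.
Qed.

Lemma tens_delta_formE n d (A : 'M[C]_n) (B : 'M[C]_d)
    (k k' : 'I_n) (v v' : 'cV[C]_d) :
  (adjmx (delta_mx k (0 : 'I_1) *t v) *m (A *t B)
     *m (delta_mx k' (0 : 'I_1) *t v')) 0 0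
  = A k k' * inner v (B *m v').
Proof.
rewrite adjmx_tens adjmx_delta !tensmx_mul -rowE -colE /inner mulmxA.
by rewrite mxE !(ord1 (_ .1)) !(ord1 (_ .2)) !mxE.
Qed.

Section TensorEmbedding.

Variables (n d m : nat) (u : 'I_n -> 'cV[C]_d) (k : 'I_m -> 'I_n).

Definition tens_embed : 'M[C]_(n * d, m) :=
  \matrix_(r, c) (delta_mx (k c) (0 : 'I_1) *t u (k c)) r 0.

Lemma tens_embed_formE (A : 'M[C]_n) (B : 'M[C]_d) c c' :
  (adjmx tens_embed *m (A *t B) *m tens_embed) c c'
  = A (k c) (k c') * inner (u (k c)) (B *m u (k c')).
Proof. by rewrite adjmx_mulmx_colsE tens_delta_formE. Qed.

Hypotheses (u_unit : forall g, inner (u g) (u g) = 1) (k_inj : injective k).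

Lemma tens_embed_isometry : adjmx tens_embed *m tens_embed = 1%:M.
Proof.
apply/matrixP => c c'.
rewrite -(mulmx1 (adjmx tens_embed)) -tensmx11 tens_embed_formE mul1mx !mxE.
rewrite (inj_eq k_inj).
by case: (eqVneq c c') => [->|_]; rewrite ?u_unit ?mulr1 ?mul0r.
Qed.

Lemma tens_embed_edge_diag (e : rel 'I_n) x y :
  (forall g g', e g g' -> inner (u g) (u g') = 0) -> (x == y) || e x y ->
  is_diag_mx (adjmx tens_embed *m (delta_mx x y *t 1%:M) *m tens_embed).
Proof.
move=> u_orth xy_edge; apply/is_diag_mxP => c c' ne_cc'.
rewrite tens_embed_formE mul1mx mxE.
have [kc_x|] := eqVneq (k c) x; last by rewrite mul0r.
have [kc'_y|] := eqVneq (k c') y; last by rewrite andbF mul0r.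
subst x y.
rewrite (inj_eq k_inj) (negbTE (ne_cc' : c != c')) /= in xy_edge.
by rewrite u_orth ?mulr0.
Qed.

End TensorEmbedding.

Lemma Delta_cohom_le_Ghat_tensor n (e : rel 'I_n) d m :
  orth_rep e d -> (m <= n)%N -> cohom_le (Delta m) (nc_tensor (Ghat e) (Cnc d)).
Proof.
move=> [u [u_unit u_orth]] le_mn.
have k_inj : injective (widen_ord le_mn) by move=> i j [] /ord_inj.
pose E := tens_embed u (widen_ord le_mn).
exists 1%N, (fun=> E); split.
  by rewrite big_ord1 (tens_embed_isometry u_unit k_inj).
move=> _ _ A GA.
pose f := (linfun (mulmxr E) \o linfun (mulmx (adjmx E)))%VF.
suff /subvP/(_ A GA) : (nc_tensor (Ghat e) (Cnc d) <= f @^-1: Delta m)%VS.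
  by rewrite -memv_preim comp_lfunE !lfunE.
apply: Ghat_tensor_Cnc_subv => x y xy.
rewrite -memv_preim comp_lfunE !lfunE /=.
exact/memv_Delta/(tens_embed_edge_diag k_inj u_orth xy).
Qed.

Theorem lemma3p9 (n : nat) (e : rel 'I_n) (d M : nat) :
  simple_graph e -> (0 < d)%N -> (0 < M)%N ->
  orth_rank_le e d -> has_disjoint_cliques e M d ->
  cohom_le (Delta (M * d)) (nc_tensor (Ghat e) (Cnc d)).
Proof.
move=> _ _ _ [d' le_d'd rep] [K [cliqueK disjK]].
apply: Delta_cohom_le_Ghat_tensor; first exact: orth_rep_widen rep.
have := card_disjoint_family (fun i => proj1 (cliqueK i)) disjK.
by rewrite !card_ord.
Qed.
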